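(* Let $\mathcal{A}=\mathcal{R}*_K\mathcal{S}*_L\mathcal{T}\in\mathbb{C}^{I_1\times\cdots\times I_N\times J_1\times\cdots\times J_M}$, where $\mathcal{R}\in\mathbb{C}^{I_1\times\cdots\times I_N\times H_1\times\cdots\times H_K}$, $\mathcal{S}\in\mathbb{C}^{H_1\times\cdots\times H_K\times G_1\times\cdots\times G_L}$ and $\mathcal{T}\in\mathbb{C}^{G_1\times\cdots\times G_L\times J_1\times\cdots\times J_M}$. Then $$(\mathcal{R}^{\dagger}*_N\mathcal{A}*_M\mathcal{T}^{\dagger})^{\dagger}=(\mathcal{A}*_M\mathcal{T}^{\dagger})^{\dagger}*_N\mathcal{A}*_M(\mathcal{R}^{\dagger}*_N\mathcal{A})^{\dagger}.$$
   Context: $\mathbb{C}^{I_1\times\cdots\times I_N}$ denotes the set of complex tensors of order $N$ and dimension $I_1\times\cdots\times I_N$. For $\mathcal{A}\in\mathbb{C}^{I_1\times\cdots\times I_N\times K_1\times\cdots\times K_N}$ and $\mathcal{B}\in\mathbb{C}^{K_1\times\cdots\times K_N\times J_1\times\cdots\times J_M}$, the Einstein product $\mathcal{A}*_N\mathcal{B}\in\mathbb{C}^{I_1\times\cdots\times I_N\times J_1\times\cdots\times J_M}$ is defined by $(\mathcal{A}*_N\mathcal{B})_{i_1\dots i_N j_1\dots j_M}=\sum_{k_1,\dots,k_N}a_{i_1\dots i_N k_1\dots k_N}b_{k_1\dots k_N j_1\dots j_M}$; it is associative. For $\mathcal{A}\in\mathbb{C}^{I_1\times\cdots\times I_N\times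 J_1\times\cdots\times J_M}$, $\mathcal{A}^H$ denotes the conjugate transpose, $(\mathcal{A}^H)_{j_1\dots j_M i_1\dots i_N}=\overline{a_{i_1\dots i_N j_1\dots j_M}}$, and the Moore–Penrose inverse $\mathcal{A}^{\dagger}$ is the unique tensor $\mathcal{X}\in\mathbb{C}^{J_1\times\cdots\times J_M\times I_1\times\cdots\times I_N}$ with $\mathcal{A}*_M\mathcal{X}*_N\mathcal{A}=\mathcal{A}$, $\mathcal{X}*_N\mathcal{A}*_M\mathcal{X}=\mathcal{X}$, $(\mathcal{A}*_M\mathcal{X})^H=\mathcal{A}*_M\mathcal{X}$, $(\mathcal{X}*_N\mathcal{A})^H=\mathcal{X}*_N\mathcal{A}$. *)

(* Tensors over a numeric closed field C (e.g. the complex numbers),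
   with conjugation z^*. *)
From HB Require Import structures.
From mathcomp Require Import all_boot all_order all_algebra.
From Stdlib Require Import ClassicalEpsilon.
Set Implicit Arguments. Unset Strict Implicit. Unset Printing Implicit Defensive.
Import Order.TTheory GRing.Theory Num.Theory.
Local Open Scope ring_scope.

Definition midx (N : nat) (I : 'I_N -> nat) : finType :=
  {dffun forall k : 'I_N, 'I_(I k)}.

Definition tensor (C : numClosedFieldType) (N : nat) (I : 'I_N -> nat)
  (M : nat) (J : 'I_M -> nat) : Type := midx I -> midx J -> C.

Definition einstein (C : numClosedFieldType) N (I : 'I_N -> nat) K (H : 'I_K -> nat)
  M (J : 'I_M -> nat) (A : tensor C I H) (B : tensor C H J) : tensor C I J :=
  fun i j => \sum_(k : midx H) A i k * B k j.

Definition ctrans (C : numClosedFieldType) N (I : 'I_N -> nat) M (J : 'I_M -> nat)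
  (A : tensor C I J) : tensor C J I := fun j i => (A i j)^*.

Definition is_mpinv (C : numClosedFieldType) N (I : 'I_N -> nat) M (J : 'I_M -> nat)
  (A : tensor C I J) (X : tensor C J I) : Prop :=
  [/\ einstein (einstein A X) A = A,
      einstein (einstein X A) X = X,
      ctrans (einstein A X) = einstein A X
    & ctrans (einstein X A) = einstein X A].

Definition mpinv (C : numClosedFieldType) N (I : 'I_N -> nat) M (J : 'I_M -> nat)
  (A : tensor C I J) : tensor C J I :=
  epsilon (inhabits (fun _ _ => 0)) (is_mpinv A).

(** Flattening multi-indices turns Einstein products into matrix products and
    conjugate transposes into conjugate transposes of matrices, so tensors
    inherit from matrices a Moore-Penrose inverse, built from a full-rank
    factorization and determined uniquely by the Penrose equations.
    For [A = R S T] put [U = A T^+] and [V = R^+ A]; then [U T = A] and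
    [R V = A], hence [A T^+ U^+ A = A] and [A V^+ R^+ A = A].  With
    [B = R^+ A T^+] and [X = U^+ A V^+] this gives [B X = V V^+] and
    [X B = U^+ U], which are hermitian, and the remaining two Penrose equations
    for [(B, X)] follow from those for [V] and [U]. *)
From mathcomp Require Import all_boot all_order all_algebra.
From Stdlib Require Import FunctionalExtensionality ClassicalEpsilon.
Set Implicit Arguments. Unset Strict Implicit. Unset Printing Implicit Defensive.
Local Open Scope ring_scope.
Local Open Scope sesquilinear_scope.

Section MatrixPseudoInverse.
Variable C : numClosedFieldType.

Lemma trmxC_mul m n p (A : 'M[C]_(m, n)) (B : 'M[C]_(n, p)) :
  (A *m B) ^t* = B ^t* *m A ^t*.
Proof. by rewrite trmx_mul map_mxM. Qed.

Lemma trmxC_inv n (A : 'M[C]_n) : (invmx A) ^t* = invmx (A ^t*).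
Proof. by rewrite trmx_inv map_invmx. Qed.

Lemma row_free_trmxC m n (A : 'M[C]_(m, n)) : row_free (A ^t*) = row_full A.
Proof. by rewrite /row_free /row_full mxrank_map mxrank_tr. Qed.

Lemma mulmx_trmxC_eq0 n (v : 'rV[C]_n) : v *m v ^t* = 0 -> v = 0.
Proof.
move=> vv0; apply/eqP; rewrite -(dnorm_eq0 (@dotmx C n)) /=.
by rewrite dotmxE vv0 mxE.
Qed.

Lemma mulmx_trmxC_unit m n (A : 'M[C]_(m, n)) :
  row_free A -> A *m A ^t* \in unitmx.
Proof.
move=> freeA; rewrite -row_free_unit -kermx_eq0.
apply/eqP/row_matrixP => i; rewrite row0; set v := row i _.
have vAA0 : v *m (A *m A ^t*) = 0 by rewrite /v -row_mul mulmx_ker row0.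
apply: (row_free_inj freeA); rewrite /= mul0mx; apply: mulmx_trmxC_eq0.
by rewrite trmxC_mul !mulmxA -(mulmxA v) vAA0 mul0mx.
Qed.

Lemma trmxC_mulmx_unit m n (A : 'M[C]_(m, n)) :
  row_full A -> A ^t* *m A \in unitmx.
Proof.
by rewrite -row_free_trmxC => /mulmx_trmxC_unit; rewrite trmxCK.
Qed.

Definition is_mxpinv m n (A : 'M[C]_(m, n)) (X : 'M[C]_(n, m)) :=
  [/\ A *m X *m A = A, X *m A *m X = X,
      (A *m X) ^t* = A *m X & (X *m A) ^t* = X *m A].

(* [G^H (G G^H)^-1] and [(F^H F)^-1 F^H] are pseudo-inverses of the
   full-rank factors, and their product in reverse order is one of [F G]. *)
Lemma is_mxpinv_full_rank_mul m n r (F : 'M[C]_(m, r)) (G : 'M[C]_(r, n)) :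
  row_full F -> row_free G ->
  is_mxpinv (F *m G)
            (G ^t* *m invmx (G *m G ^t*) *m invmx (F ^t* *m F) *m F ^t*).
Proof.
move=> /trmxC_mulmx_unit uF /mulmx_trmxC_unit uG.
set P := invmx (F ^t* *m F); set Q := invmx (G *m G ^t*).
have hermP : P ^t* = P by rewrite trmxC_inv trmxC_mul trmxCK.
have hermQ : Q ^t* = Q by rewrite trmxC_inv trmxC_mul trmxCK.
have GQK p (Z : 'M[C]_(r, p)) : G *m (G ^t* *m (Q *m Z)) = Z.
  by rewrite !mulmxA mulmxV // mul1mx.
have QGK p (Z : 'M[C]_(r, p)) : Q *m (G *m (G ^t* *m Z)) = Z.
  by rewrite (mulmxA G) mulmxA mulVmx // mul1mx.
have PFK p (Z : 'M[C]_(r, p)) : P *m (F ^t* *m (F *m Z)) = Z.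
  by rewrite (mulmxA (F ^t*)) mulmxA mulVmx // mul1mx.
split; rewrite -!mulmxA.
- by rewrite GQK PFK.
- by rewrite PFK QGK.
- by rewrite GQK !trmxC_mul trmxCK hermP -!mulmxA.
- by rewrite PFK !trmxC_mul trmxCK hermQ -!mulmxA.
Qed.

Lemma is_mxpinv_exists m n (A : 'M[C]_(m, n)) : exists X, is_mxpinv A X.
Proof.
rewrite -(mulmx_base A); eexists.
by apply: is_mxpinv_full_rank_mul;
  [exact: col_base_full | exact: row_base_free].
Qed.

Lemma is_mxpinv_uniq m n (A : 'M[C]_(m, n)) X Y :
  is_mxpinv A X -> is_mxpinv A Y -> X = Y.
Proof.
move=> [X1 X2 X3 X4] [Y1 Y2 Y3 Y4].
have AXY : A *m X = A *m Y.
  by rewrite -X3 -{1}Y1 -mulmxA trmxC_mul X3 Y3 mulmxA X1.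
have XAY : X *m A = Y *m A.
  rewrite -Y4 -{2}X1 !mulmxA -(mulmxA (Y *m A)) trmxC_mul X4 Y4.
  by rewrite mulmxA -(mulmxA X) -mulmxA Y1.
by rewrite -X2 XAY -mulmxA AXY mulmxA Y2.
Qed.

End MatrixPseudoInverse.

Local Notation "A *e B" := (einstein A B) (at level 40, left associativity).

Section TensorPseudoInverse.
Variable C : numClosedFieldType.

Definition mx_of_tensor N (I : 'I_N -> nat) M (J : 'I_M -> nat)
  (A : tensor C I J) : 'M[C]_(#|midx I|, #|midx J|) :=
  \matrix_(i, j) A (enum_val i) (enum_val j).

Definition tensor_of_mx N (I : 'I_N -> nat) M (J : 'I_M -> nat)
  (X : 'M[C]_(#|midx I|, #|midx J|)) : tensor C I J :=
  fun i j => X (enum_rank i) (enum_rank j).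

Lemma mx_of_tensorK N (I : 'I_N -> nat) M (J : 'I_M -> nat) :
  cancel (@mx_of_tensor N I M J) (@tensor_of_mx N I M J).
Proof.
move=> A; apply: functional_extensionality => i.
by apply: functional_extensionality => j; rewrite /tensor_of_mx mxE !enum_rankK.
Qed.

Lemma tensor_of_mxK N (I : 'I_N -> nat) M (J : 'I_M -> nat) :
  cancel (@tensor_of_mx N I M J) (@mx_of_tensor N I M J).
Proof.
by move=> X; apply/matrixP => i j; rewrite mxE /tensor_of_mx !enum_valK.
Qed.

Lemma tensor_of_mxM N (I : 'I_N -> nat) K (H : 'I_K -> nat) M (J : 'I_M -> nat)
  (X : 'M[C]_(#|midx I|, #|midx H|)) (Y : 'M[C]_(#|midx H|, #|midx J|)) :
  tensor_of_mx X *e tensor_of_mx Y = tensor_of_mx (X *m Y).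
Proof.
apply: functional_extensionality => i; apply: functional_extensionality => j.
rewrite /einstein /tensor_of_mx mxE (reindex (@enum_val _ (midx H))) /=.
  by apply: eq_bigr => k _; rewrite enum_valK.
by exists (@enum_rank _) => k _; [exact: enum_valK | exact: enum_rankK].
Qed.

Lemma ctrans_tensor_of_mx N (I : 'I_N -> nat) M (J : 'I_M -> nat)
  (X : 'M[C]_(#|midx I|, #|midx J|)) :
  ctrans (tensor_of_mx X) = tensor_of_mx (X ^t*).
Proof.
apply: functional_extensionality => j; apply: functional_extensionality => i.
by rewrite /ctrans /tensor_of_mx !mxE.
Qed.

Lemma einsteinA N (I : 'I_N -> nat) K (H : 'I_K -> nat) L (G : 'I_L -> nat)
  M (J : 'I_M -> nat) (A : tensor C I H) (B : tensor C H G) (D : tensor C G J) :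
  A *e B *e D = A *e (B *e D).
Proof.
rewrite -(mx_of_tensorK A) -(mx_of_tensorK B) -(mx_of_tensorK D).
by rewrite !tensor_of_mxM mulmxA.
Qed.

Lemma is_mpinv_tensor_of_mx N (I : 'I_N -> nat) M (J : 'I_M -> nat)
  (A : 'M[C]_(#|midx I|, #|midx J|)) (X : 'M[C]_(#|midx J|, #|midx I|)) :
  is_mpinv (tensor_of_mx A) (tensor_of_mx X) <-> is_mxpinv A X.
Proof.
rewrite /is_mpinv !tensor_of_mxM !ctrans_tensor_of_mx.
have tinj := can_inj (@tensor_of_mxK _ _ _ _).
by split=> [[/tinj ? /tinj ? /tinj ? /tinj ?] | [-> -> -> ->]].
Qed.

Lemma mpinvP N (I : 'I_N -> nat) M (J : 'I_M -> nat) (A : tensor C I J) :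
  is_mpinv A (mpinv A).
Proof.
apply: epsilon_spec; have [X pinvX] := is_mxpinv_exists (mx_of_tensor A).
by exists (tensor_of_mx X); rewrite -(mx_of_tensorK A) is_mpinv_tensor_of_mx.
Qed.

Lemma is_mpinv_uniq N (I : 'I_N -> nat) M (J : 'I_M -> nat)
  (A : tensor C I J) (X Y : tensor C J I) :
  is_mpinv A X -> is_mpinv A Y -> X = Y.
Proof.
rewrite -(mx_of_tensorK A) -(mx_of_tensorK X) -(mx_of_tensorK Y).
rewrite !is_mpinv_tensor_of_mx => pinvX pinvY.
by rewrite (is_mxpinv_uniq pinvX pinvY).
Qed.

Lemma mpinv_unique N (I : 'I_N -> nat) M (J : 'I_M -> nat)
  (A : tensor C I J) (X : tensor C J I) :
  is_mpinv A X -> mpinv A = X.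
Proof. exact: is_mpinv_uniq (mpinvP A). Qed.

Lemma is_mpinv_sandwich N (I : 'I_N -> nat) K (H : 'I_K -> nat)
  L (G : 'I_L -> nat) M (J : 'I_M -> nat)
  (R : tensor C I H) (T : tensor C G J) (A : tensor C I J)
  (Rp : tensor C H I) (Tp : tensor C J G)
  (Up : tensor C G I) (Vp : tensor C J H) :
  A *e Tp *e T = A -> R *e Rp *e A = A ->
  is_mpinv (A *e Tp) Up -> is_mpinv (Rp *e A) Vp ->
  is_mpinv (Rp *e A *e Tp) (Up *e A *e Vp).
Proof.
move=> ATpT RRpA [UUpU UpUUp _ hermUpU] [VVpV _ hermVVp _].
(* Absorption laws carry an arbitrary right factor [Z], so that they rewrite
   inside fully right-associated products. *)
have UUpUK n (D : 'I_n -> nat) (Z : tensor C G D) :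
    A *e (Tp *e (Up *e (A *e (Tp *e Z)))) = A *e (Tp *e Z).
  by have := congr1 (fun X => X *e Z) UUpU; rewrite !einsteinA.
have UpUUpK n (D : 'I_n -> nat) (Z : tensor C I D) :
    Up *e (A *e (Tp *e (Up *e Z))) = Up *e Z.
  by have := congr1 (fun X => X *e Z) UpUUp; rewrite !einsteinA.
have VVpVK n (D : 'I_n -> nat) (Z : tensor C J D) :
    Rp *e (A *e (Vp *e (Rp *e (A *e Z)))) = Rp *e (A *e Z).
  by have := congr1 (fun X => X *e Z) VVpV; rewrite !einsteinA.
have ATpUpAK n (D : 'I_n -> nat) (Z : tensor C J D) :
    A *e (Tp *e (Up *e (A *e Z))) = A *e Z.
  by rewrite -{2 3}ATpT !einsteinA UUpUK -!einsteinA ATpT.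
have AVpRpAK n (D : 'I_n -> nat) (Z : tensor C J D) :
    A *e (Vp *e (Rp *e (A *e Z))) = A *e Z.
  by rewrite -{1}RRpA !einsteinA VVpVK -!einsteinA RRpA.
have BX : Rp *e A *e Tp *e (Up *e A *e Vp) = Rp *e A *e Vp.
  by rewrite !einsteinA ATpUpAK.
have XB : Up *e A *e Vp *e (Rp *e A *e Tp) = Up *e (A *e Tp).
  by rewrite !einsteinA AVpRpAK.
split; rewrite ?BX ?XB //.
  by rewrite !einsteinA VVpVK.
by rewrite !einsteinA UpUUpK.
Qed.

End TensorPseudoInverse.

Unset Implicit Arguments.
Theorem theorem3p3 (C : numClosedFieldType)
  (N : nat) (I : 'I_N -> nat) (K : nat) (H : 'I_K -> nat)
  (L : nat) (G : 'I_L -> nat) (M : nat) (J : 'I_M -> nat)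
  (R : tensor C I H) (S : tensor C H G) (T : tensor C G J) (A : tensor C I J) :
  A = einstein (einstein R S) T ->
  mpinv (einstein (einstein (mpinv R) A) (mpinv T)) =
  einstein (einstein (mpinv (einstein A (mpinv T))) A)
           (mpinv (einstein (mpinv R) A)).
Proof.
move=> defA; apply: mpinv_unique.
apply: (is_mpinv_sandwich (R := R) (T := T)); try exact: mpinvP.
- have [TTpT _ _ _] := mpinvP T.
  rewrite einsteinA in TTpT.
  by rewrite defA !einsteinA TTpT.
- have [RRpR _ _ _] := mpinvP R.
  by rewrite defA -!einsteinA RRpR.
Qed.
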